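(* Let $(x^k)$ be generated by the augmented Lagrangian method described below, where each step satisfies the inexactness assumption described below with $\varepsilon_k\downarrow0$, and let $\bar x$ be a limit point of $(x^k)$ along some subsequence $K\subset\mathbb{N}$ (i.e. $x^k\to_K\bar x$). If $\bar x$ is feasible for the GNEP (i.e. $g^\nu(\bar x)\le0$ and $h^\nu(\bar x)\le0$ for all $\nu$), then for every $\nu$ $$\nabla_{x^\nu}\theta_\nu(x^k)+\nabla_{x^\nu}g^\nu(x^k)\lambda^{\nu,k}+\nabla_{x^\nu}h^\nu(x^k)\mu^{\nu,k}\to_K0,$$ $$\min\{-g^\nu(x^k),\lambda^{\nu,k}\}\to_K0,\qquad\min\{-h^\nu(x^k),\mu^{\nu,k}\}\to_K0.$$
   Context: GNEP: $N$ players, variables $x=(x^1,\ldots,x^N)\in\mathbb{R}^n$, $x^\nu\in\mathbb{R}^{n_\nu}$. Player $\nu$ solves $\min_{x^\nu}\theta_\nu(x)$ s.t. $g^\nu(x)\le0$, $h^\nu(x)\le0$, with continuously differentiable $\theta_\nu:\mathbb{R}^n\to\mathbb{R}$, $g^\nu:\mathbb{R}^n\to\mathbb{R}^{m_\nu}$, $h^\nu:\mathbb{R}^n\to\mathbb{R}^{p_\nu}$ ($p_\nu=0$ allowed); $m=\sum m_\nu$, $p=\sum p_\nu$. Notation: $v_+=\max\{0,v\}$ componentwise; $\nabla f$ = transposed Jacobian, $\nabla_{x^\nu}f$ its rows for $x^\nu$; $\min$ componentwise; Euclidean norms; $\to_K$ = convergence along $k\in K$. Vectors in $\mathbb{R}^m$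 (resp. $\mathbb{R}^p$) are split into player blocks $\lambda^{\nu}\in\mathbb{R}^{m_\nu}$ (resp. $\mu^\nu\in\mathbb{R}^{p_\nu}$). Augmented Lagrangian of player $\nu$: $L_a^\nu(x,u;\rho)=\theta_\nu(x)+\frac{\rho}{2}\|(g^\nu(x)+u/\rho)_+\|^2$. Method: choose $x^0\in\mathbb{R}^n,\lambda^0\in\mathbb{R}^m,\mu^0\in\mathbb{R}^p$, an initial $u^0\in\mathbb{R}^m$, $u^{\max}\ge0$, and for each $\nu$: $\tau_\nu\in(0,1)$, $\gamma_\nu>1$, $\rho_{\nu,0}>0$. For $k=0,1,2,\dots$ (the method is assumed to run forever): (1) compute $(x^{k+1},\mu^{k+1})\in\mathbb{R}^{n+p}$ satisfying the inexactness assumption; (2) $\lambda^{\nu,k+1}=(u^{\nu,k}+\rho_{\nu,k}g^\nu(x^{k+1}))_+$; (3) for each $\nu$: if $\|\min\{-g^\nu(x^{k+1}),\lambda^{\nu,k+1}\}\|\le\tau_\nu\|\min\{-g^\nu(x^k),\lambda^{\nu,k}\}\|$ then $\rho_{\nu,k+1}=\rho_{\nu,k}$, else $\rho_{\nu,k+1}=\gamma_\nu\rho_{\nu,k}$; (4) $u^{k+1}=\min\{\lambda^{k+1},u^{\max}\}$ componentwise. Inexactness assumption: for all $k,\nu$, $\|\nabla_{x^\nu}L_a^\nu(x^{k+1},u^{\nu,k};\rho_{\nu,k})+\nabla_{x^\nu}h^\nu(x^{k+1})\mu^{\nu,k+1}\|\le\varepsilon_k$ and $\|\min\{-h^\nu(x^{k+1}),\mu^{\nu,k+1}\}\|\le\varepsilon_k'$,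 with $(\varepsilon_k)\subset[0,\infty)$ bounded and $\varepsilon'_k\to0$. *)

From HB Require Import structures.
From mathcomp Require Import all_boot all_order all_algebra.
From mathcomp Require Import all_classical all_reals all_analysis.
Set Implicit Arguments. Unset Strict Implicit. Unset Printing Implicit Defensive.
Import Order.TTheory GRing.Theory Num.Theory.
Import numFieldNormedType.Exports.
Local Open Scope ring_scope.

(* Player blocks are encoded by maps assigning each coordinate to a player:
   bx : 'I_n -> 'I_N (coordinates of x), bg : 'I_m -> 'I_N (components of g),
   bh : 'I_p -> 'I_N (components of h). *)

Definition unitv (R : realType) (n : nat) (i : 'I_n) : 'rV[R]_n := delta_mx 0 i.

Definition pd (R : realType) (n : nat) (f : 'rV[R]_n -> R) (x : 'rV[R]_n) (i : 'I_n) : R :=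
  'D_(unitv R i) f x.

Definition C1 (R : realType) (n : nat) (f : 'rV[R]_n -> R) : Prop :=
  (forall x, differentiable f x) /\ (forall i : 'I_n, continuous (fun x => pd f x i)).

Definition bnorm (R : realType) (k : nat) (P : pred 'I_k) (v : 'I_k -> R) : R :=
  Num.sqrt (\sum_(j < k | P j) v j ^+ 2).

Definition La (R : realType) (N n m : nat) (bg : 'I_m -> 'I_N)
  (theta : 'I_N -> 'rV[R]_n -> R) (g : 'I_m -> 'rV[R]_n -> R)
  (nu : 'I_N) (u : 'I_m -> R) (rho : R) (x : 'rV[R]_n) : R :=
  theta nu x + rho / 2 * \sum_(j < m | bg j == nu) (Num.max 0 (g j x + u j / rho)) ^+ 2.

(* If the penalty parameter rho_nu stays bounded, it is eventually never
   updated, so the complementarity measure of player nu contracts by the factor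
   tau_nu at every step and tends to zero; otherwise rho_nu is multiplied by
   gam_nu infinitely often and tends to +oo.  In that case, for a constraint
   with g_j(xbar) < 0 the multiplier max(0, u + rho g_j) is eventually 0 because
   u stays bounded by max(u^max, u^0), and for an active constraint
   |min(-g_j, lambda_j)| <= |g_j| -> 0.  The stationarity residual at x^(k+1)
   is exactly the gradient of the augmented Lagrangian, since lambda^(k+1) is
   the multiplier estimate produced by its derivative, so it is controlled by
   the inexactness tolerance eps_k, as is the complementarity of h by eps'_k. *)

From HB Require Import structures.
From mathcomp Require Import all_boot all_order all_algebra.
From mathcomp Require Import all_classical all_reals all_analysis.
From mathcomp Require Import ring lra.
Set Implicit Arguments.
Unset Strict Implicit.
Unset Printing Implicit Defensive.

Import Order.TTheory GRing.Theory Num.Theory.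
Import numFieldNormedType.Exports.
Local Open Scope classical_set_scope.
Local Open Scope ring_scope.

Lemma is_derive_max0_sqr (R : realFieldType) (s : R) :
  is_derive s 1 (fun t : R => Num.max 0 t ^+ 2) (2 * Num.max 0 s).
Proof.
have [s_lt0|s_gt0|->] := ltgtP s 0.
- rewrite mulr0; apply: (near_eq_is_derive _ (is_derive_cst 0 s 1)).
  near=> t; rewrite /= max_l ?expr0n // ltW //.
  by near: t; apply: (cvgr_lt s) => //; exact: cvg_id.
- have dsqr : is_derive s 1 (fun t : R => t ^+ 2) (2 * s).
    apply: DeriveDef; first exact: exprn_derivable.
    by rewrite exp_derive expr1 [_%:A]mulr1.
  apply: (near_eq_is_derive _ dsqr).
  near=> t; rewrite max_r // ltW //.
  by near: t; apply: (cvgr_gt s) => //; exact: cvg_id.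
- pose quot (h : R) := h^-1 *: (((fun t : R => Num.max 0 t ^+ 2) \o shift 0) (h *: 1)
                                - Num.max 0 0 ^+ 2).
  have quotE : {near (0 : R)^', (fun h : R => Num.max 0 h) =1 quot}.
    near=> h; rewrite /quot /= [_%:A]mulr1 addr0 maxxx expr0n subr0 [_ *: _]mulrC.
    have [h_gt0|h_le0] := ltP 0 h; last by rewrite expr0n mul0r.
    by rewrite expr2 mulfK // gt_eqF.
  have quot_cvg0 : quot @ 0^' --> 0.
    apply: cvg_trans (near_eq_cvg quotE) _.
    apply: (@squeeze_cvgr _ _ _ _ (cst 0) (fun h => `|h|)); last 2 first.
    - exact: cvg_cst.
    - by rewrite -[X in _ --> X](@normr0 _ R); apply: cvg_norm; exact: cvg_within_filter cvg_id.
    by near=> h; rewrite le_max lexx ge_max normr_ge0 ler_norm.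
  rewrite mulr0; apply: DeriveDef; last exact: cvg_lim quot_cvg0.
  by apply/cvg_ex; exists 0.
Unshelve. all: by end_near. Qed.

Lemma is_derive_max0_sqr_comp (R : realFieldType) (V : normedModType R) (f : V -> R) (x v : V) :
  differentiable f x ->
  is_derive x v (fun y => Num.max 0 (f y) ^+ 2) (2 * Num.max 0 (f x) * 'D_v f x).
Proof.
move=> df.
have dsqr := is_derive_max0_sqr (f x).
have dsqr1 : derivable (fun t : R => Num.max 0 t ^+ 2) (f x) 1 by case: dsqr.
have dsqr_diff := (derivable1_diffP _ _).1 dsqr1.
have dcomp := differentiable_comp df dsqr_diff.
apply: DeriveDef; first exact: diff_derivable.
rewrite (deriveE v dcomp) diff_comp //=.
apply: etrans (congr1 (@^~ ('d f x v)) (deriv1E dsqr1)) _.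
rewrite /= derive1E (deriveE v df) [RHS]mulrC; congr (_ * _); exact: derive_val.
Qed.

Lemma derive_La (R : realType) (N n m : nat) (bg : 'I_m -> 'I_N)
    (theta : 'I_N -> 'rV[R]_n -> R) (g : 'I_m -> 'rV[R]_n -> R)
    (nu : 'I_N) (u : 'I_m -> R) (rho : R) (x v : 'rV[R]_n) :
  0 < rho -> differentiable (theta nu) x -> (forall j, differentiable (g j) x) ->
  'D_v (La bg theta g nu u rho) x = 'D_v (theta nu) x
    + \sum_(j < m | bg j == nu) 'D_v (g j) x * Num.max 0 (u j + rho * g j x).
Proof.
move=> rho_gt0 dtheta dg.
pose pen j y := Num.max 0 (g j y + u j / rho) ^+ 2.
have dpen j : is_derive x v (pen j) (2 * Num.max 0 (g j x + u j / rho) * 'D_v (g j) x).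
  have dgj : is_derive x v (g j) ('D_v (g j) x) by exact/derivableP/diff_derivable.
  have dshift : is_derive x v (g j + cst (u j / rho)) ('D_v (g j) x).
    by apply: is_derive_eq (is_deriveD dgj (is_derive_cst _ x v)) _; rewrite addr0.
  have dshift_diff : differentiable (g j + cst (u j / rho)) x.
    by apply: differentiableD => //; exact: differentiable_cst.
  apply: is_derive_eq (is_derive_max0_sqr_comp v dshift_diff) _.
  by rewrite (@derive_val _ _ _ _ _ _ _ dshift).
have dsum : is_derive x v (\sum_(j < m | bg j == nu) pen j)
    (\sum_(j < m | bg j == nu) 2 * Num.max 0 (g j x + u j / rho) * 'D_v (g j) x).
  by elim/big_ind2 : _ => // [|f1 d1 f2 d2]; [exact: is_derive_cst | exact: is_deriveD].
have -> : La bg theta g nu u rho = theta nu + (rho / 2) *: \sum_(j < m | bg j == nu) pen j.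
  by apply: funext => y; rewrite /La fct_sumE.
have dth : is_derive x v (theta nu) ('D_v (theta nu) x) by exact/derivableP/diff_derivable.
rewrite (@derive_val _ _ _ _ _ _ _ (is_deriveD dth (is_deriveZ (rho / 2) dsum))).
congr (_ + _); rewrite scaler_sumr; apply: eq_bigr => j _.
have maxE : Num.max 0 (u j + rho * g j x) = rho * Num.max 0 (g j x + u j / rho).
  by rewrite maxr_pMr ?ltW // mulr0 mulrDr mulrCA mulfV ?gt_eqF // mulr1 addrC.
by rewrite maxE -[_ *: _]/(_ * _); field.
Qed.

Lemma bnorm_ge0 (R : realType) (k : nat) (P : pred 'I_k) (v : 'I_k -> R) :
  0 <= bnorm P v.
Proof. exact: sqrtr_ge0. Qed.

Lemma bnorm_cvg0 (R : realType) (T : Type) (F : set_system T) (FF : Filter F)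
    (k : nat) (P : pred 'I_k) (v : T -> 'I_k -> R) :
  (forall j, P j -> (fun t => v t j) @ F --> 0) -> (fun t => bnorm P (v t)) @ F --> 0.
Proof.
move=> v_cvg0.
have sqr_cvg0 j : P j -> (fun t => v t j ^+ 2) @ F --> 0.
  by move=> Pj; rewrite -(mulr0 0); exact: cvgM (v_cvg0 j Pj) (v_cvg0 j Pj).
have sum_cvg0 : (fun t => \sum_(j < k | P j) v t j ^+ 2) @ F --> \sum_(j < k | P j) (0 : R).
  exact: (@cvg_big _ _ _ _ _ add_continuous _ _ _ (fun j t => v t j ^+ 2) (fun=> 0) FF sqr_cvg0).
rewrite big1_eq in sum_cvg0.
by rewrite -sqrtr0; exact: cvg_comp sum_cvg0 (@sqrt_continuous R 0).
Qed.

Lemma cvgny_incr (phi : nat -> nat) :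
  {homo phi : a b / (a < b)%N} -> phi @ \oo --> \oo.
Proof.
move=> phi_incr; have le_phi k : (k <= phi k)%N.
  by elim: k => // k IH; exact: leq_ltn_trans IH (phi_incr _ _ (ltnSn k)).
apply/cvgnyPge => A; near=> k; apply: leq_trans (le_phi k).
by near: k; exact: nbhs_infty_ge.
Unshelve. all: by end_near. Qed.

Lemma cvgny_pred : predn @ \oo --> \oo.
Proof.
by rewrite (_ : predn = subn^~ 1); [exact: cvg_subnr | apply: funext => n; rewrite subn1].
Qed.

Lemma cvg0_le_shiftS (R : realFieldType) (a e : nat -> R) :
  (forall k, 0 <= a k) -> (forall k, a k.+1 <= e k) -> e @ \oo --> 0 -> a @ \oo --> 0.
Proof.
move=> a_ge0 a_le e_cvg0; rewrite -cvg_shiftS.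
apply: (@squeeze_cvgr _ _ _ _ (cst 0) e) => //; last exact: cvg_cst.
by near=> k; rewrite a_ge0 a_le.
Unshelve. all: by end_near. Qed.

Lemma contraction_cvg0 (R : archiRealFieldType) (b : nat -> R) (tau : R) :
  (forall k, 0 <= b k) -> 0 <= tau -> tau < 1 ->
  (\forall k \near \oo, b k.+1 <= tau * b k) -> b @ \oo --> 0.
Proof.
move=> b_ge0 tau_ge0 tau_lt1 [K _ b_contr].
have b_geo d : b (d + K)%N <= tau ^+ d * b K.
  elim: d => [|d IH]; first by rewrite mul1r.
  rewrite addSn exprS -mulrA; apply: le_trans (b_contr _ (leq_addl _ _)) _.
  exact: ler_wpM2l.
rewrite -(cvg_shiftn K); apply: (@squeeze_cvgr _ _ _ _ (cst 0) (fun d => tau ^+ d * b K)).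
- by near=> d; rewrite b_ge0 b_geo.
- exact: cvg_cst.
- by rewrite -(mul0r (b K)); apply: cvgM (cvg_expr _) (cvg_cst _); rewrite ger0_norm.
Unshelve. all: by end_near. Qed.

Section penalty_update.
Variables (R : realType) (rho : nat -> R) (gam : R) (keep : nat -> bool).
Hypotheses (rho0_gt0 : 0 < rho 0) (gam_gt1 : 1 < gam)
  (rhoS : forall k, rho k.+1 = if keep k then rho k else gam * rho k).

Lemma penalty_gt0 k : 0 < rho k.
Proof.
elim: k => // k IH; rewrite rhoS; case: (keep k) => //.
by rewrite mulr_gt0 // (lt_trans ltr01).
Qed.

Lemma penalty_nondecreasing : {homo rho : a b / (a <= b)%N >-> a <= b}.
Proof.
apply/nondecreasing_seqP => k; rewrite rhoS; case: (keep k) => //.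
by rewrite ler_peMl ?ltW ?penalty_gt0.
Qed.

Lemma penalty_growth : ~ (\forall k \near \oo, keep k) ->
  forall t : nat, \forall k \near \oo, rho 0 + t%:R * ((gam - 1) * rho 0) <= rho k.
Proof.
move=> not_ev_keep; elim=> [|t [K _ rho_ge]].
  by near=> k; rewrite mul0r addr0 penalty_nondecreasing.
have /existsNP[k /not_implyP[Kk /negP keep_k]] : ~ forall k, (K <= k)%N -> keep k.
  by move=> keep_from_K; apply: not_ev_keep; exists K.
exists k.+1 => // k' /= kk'; apply: le_trans (penalty_nondecreasing kk').
have step_le : (gam - 1) * rho 0 <= (gam - 1) * rho k.
  by apply: ler_wpM2l; [rewrite subr_ge0 ltW | exact: penalty_nondecreasing].
rewrite rhoS (negbTE keep_k) -addn1 natrD mulrDl mul1r addrA.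
have := rho_ge k Kk; lra.
Unshelve. all: by end_near. Qed.

Lemma penalty_cvgy : ~ (\forall k \near \oo, keep k) -> rho @ \oo --> +oo.
Proof.
move=> not_ev_keep; apply/cvgryPge => A.
have step_gt0 : 0 < (gam - 1) * rho 0 by rewrite mulr_gt0 // subr_gt0.
have [t _ /(_ t (leqnn t)) At] := nbhs_infty_ger (A / ((gam - 1) * rho 0)).
apply: filterS (penalty_growth not_ev_keep t) => k; apply: le_trans.
rewrite ler_pdivrMr // in At; apply: le_trans At _.
by rewrite lerDr ltW.
Qed.

End penalty_update.

Lemma normr_min_opp_le (R : realDomainType) (a l : R) : 0 <= l -> `|Num.min (- a) l| <= `|a|.
Proof.
move=> l_ge0; case: (leP (- a) l) => [_|l_lt]; first by rewrite normrN.
by rewrite ger0_norm // (le_trans (ltW l_lt)) // -normrN ler_norm.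
Qed.

Lemma min_opp_penalty_cvg0 (R : realFieldType) (a r w v : nat -> R) (abar U : R) :
  a @ \oo --> abar -> abar <= 0 -> r @ \oo --> +oo -> (forall k, v k <= U) ->
  (\forall k \near \oo, w k = Num.max 0 (v k + r k * a k)) ->
  (fun k => Num.min (- a k) (w k)) @ \oo --> 0.
Proof.
move=> a_cvg abar_le0 r_cvgy v_le wE.
have [abar_lt0|abar_ge0] := ltP abar 0; last first.
  have abar0 : abar = 0 by apply/eqP; rewrite eq_le abar_le0.
  apply/norm_cvg0P; apply: (@squeeze_cvgr _ _ _ _ (cst 0) (fun k => `|a k|)).
  - near=> k; rewrite normr_ge0 normr_min_opp_le //.
    by near: k; apply: filterS wE => k ->; rewrite le_max lexx.
  - exact: cvg_cst.
  - by rewrite -[X in _ --> X](@normr0 _ R) -abar0; exact: cvg_norm.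
(* For large k, r k * a k <= - (|U| + 1), which clamps w k to 0. *)
pose c := - abar / 2.
have c_gt0 : 0 < c by rewrite /c; lra.
apply: cvg_near_cst; near=> k.
have a_lt : a k < - c by near: k; apply: (cvgr_lt abar) => //; rewrite /c; lra.
have r_ge : (`|U| + 1) / c <= r k by near: k; exact: (cvgryPge _).1 r_cvgy _.
have -> : w k = Num.max 0 (v k + r k * a k) by near: k; exact: wE.
rewrite ler_pdivrMr // in r_ge.
have pen_lt0 : v k + r k * a k < 0.
  have := v_le k; have := ler_norm U; have := normr_ge0 U; nra.
rewrite max_l ?ltW // min_r //; lra.
Unshelve. all: by end_near. Qed.

Theorem lemma4p5 (R : realType) (N n m p : nat)
  (bx : 'I_n -> 'I_N) (bg : 'I_m -> 'I_N) (bh : 'I_p -> 'I_N)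
  (theta : 'I_N -> 'rV[R]_n -> R) (g : 'I_m -> 'rV[R]_n -> R) (h : 'I_p -> 'rV[R]_n -> R)
  (Htheta : forall nu, C1 (theta nu)) (Hg : forall j, C1 (g j)) (Hh : forall l, C1 (h l))
  (tau gam : 'I_N -> R) (umax : 'I_m -> R)
  (x : nat -> 'rV[R]_n) (lam u : nat -> 'I_m -> R) (mu : nat -> 'I_p -> R)
  (rho : 'I_N -> nat -> R) (eps eps' : nat -> R)
  (Htau : forall nu, 0 < tau nu < 1) (Hgam : forall nu, 1 < gam nu)
  (Hrho0 : forall nu, 0 < rho nu 0%N) (Humax : forall j, 0 <= umax j)
  (* inexactness assumption, with eps_k decreasing to 0 and eps'_k -> 0 *)
  (Heps0 : forall k, 0 <= eps k) (Hepsdec : forall k, eps k.+1 <= eps k)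
  (Heps : eps @ \oo --> 0) (Heps'0 : forall k, 0 <= eps' k) (Heps' : eps' @ \oo --> 0)
  (Hinex1 : forall k nu,
     bnorm (fun i => bx i == nu)
       (fun i => pd (La bg theta g nu (u k) (rho nu k)) (x k.+1) i
                 + \sum_(l < p | bh l == nu) pd (h l) (x k.+1) i * mu k.+1 l)
     <= eps k)
  (Hinex2 : forall k nu,
     bnorm (fun l => bh l == nu) (fun l => Num.min (- h l (x k.+1)) (mu k.+1 l)) <= eps' k)
  (* step (2) *)
  (Hlam : forall k j, lam k.+1 j = Num.max 0 (u k j + rho (bg j) k * g j (x k.+1)))
  (* step (3) *)
  (Hrho : forall k nu, rho nu k.+1 =
     if bnorm (fun j => bg j == nu) (fun j => Num.min (- g j (x k.+1)) (lam k.+1 j))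
        <= tau nu * bnorm (fun j => bg j == nu) (fun j => Num.min (- g j (x k)) (lam k j))
     then rho nu k else gam nu * rho nu k)
  (* step (4) *)
  (Hu : forall k j, u k.+1 j = Num.min (lam k.+1 j) (umax j))
  (* limit point along a subsequence K = range phi *)
  (phi : nat -> nat) (Hphi : forall a b, (a < b)%N -> (phi a < phi b)%N)
  (xbar : 'rV[R]_n) (Hconv : (fun k => x (phi k)) @ \oo --> xbar)
  (* feasibility of xbar *)
  (Hfeas_g : forall j, g j xbar <= 0) (Hfeas_h : forall l, h l xbar <= 0) :
  forall nu : 'I_N,
    (fun k => bnorm (fun i => bx i == nu)
       (fun i => pd (theta nu) (x (phi k)) i
                 + \sum_(j < m | bg j == nu) pd (g j) (x (phi k)) i * lam (phi k) j
                 + \sum_(l < p | bh l == nu) pd (h l) (x (phi k)) i * mu (phi k) l))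
      @ \oo --> 0
    /\ (fun k => bnorm (fun j => bg j == nu)
          (fun j => Num.min (- g j (x (phi k))) (lam (phi k) j))) @ \oo --> 0
    /\ (fun k => bnorm (fun l => bh l == nu)
          (fun l => Num.min (- h l (x (phi k))) (mu (phi k) l))) @ \oo --> 0.
Proof.
move=> nu.
pose kkt k := bnorm (fun i => bx i == nu)
  (fun i => pd (theta nu) (x k) i + \sum_(j < m | bg j == nu) pd (g j) (x k) i * lam k j
            + \sum_(l < p | bh l == nu) pd (h l) (x k) i * mu k l).
pose compl_g k := bnorm (fun j => bg j == nu) (fun j => Num.min (- g j (x k)) (lam k j)).
pose compl_h k := bnorm (fun l => bh l == nu) (fun l => Num.min (- h l (x k)) (mu k l)).
change ((kkt \o phi) @ \oo --> 0 /\ (compl_g \o phi) @ \oo --> 0 /\ (compl_h \o phi) @ \oo --> 0).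
have phi_oo := cvgny_incr Hphi.
have rho_gt0 := penalty_gt0 (Hrho0 nu) (Hgam nu) (Hrho ^~ nu).
split; [|split].
- apply: cvg_comp phi_oo _; apply: cvg0_le_shiftS Heps => [k|k]; first exact: bnorm_ge0.
  apply: le_trans (Hinex1 k nu); rewrite le_eqVlt; apply/predU1l.
  congr bnorm; apply: funext => i.
  rewrite [pd (La _ _ _ _ _ _) _ _]/pd.
  rewrite (derive_La _ _ _ (rho_gt0 k) ((Htheta nu).1 _) (fun j => (Hg j).1 _)).
  by congr (_ + _ + _); apply: eq_bigr => j /eqP bgj; rewrite Hlam bgj.
- have [compl_contr|compl_not_contr] :=
    pselect (\forall k \near \oo, compl_g k.+1 <= tau nu * compl_g k).
    have /andP[tau_gt0 tau_lt1] := Htau nu.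
    apply: cvg_comp phi_oo _.
    exact: contraction_cvg0 (fun k => bnorm_ge0 _ _) (ltW tau_gt0) tau_lt1 compl_contr.
  have rho_oo := penalty_cvgy (Hrho0 nu) (Hgam nu) (Hrho ^~ nu) compl_not_contr.
  apply: bnorm_cvg0 => j /eqP bgj.
  apply: (min_opp_penalty_cvg0 (r := fun k => rho nu (phi k).-1)
           (v := fun k => u (phi k).-1 j) (U := Num.max (umax j) (u 0%N j))).
  + exact: cvg_comp Hconv (differentiable_continuous ((Hg j).1 xbar)).
  + exact: Hfeas_g.
  + apply: cvg_comp rho_oo; exact: cvg_comp phi_oo cvgny_pred.
  + move=> k; case: (phi k).-1 => [|i]; first by rewrite le_max lexx orbT.
    by rewrite Hu le_max ge_min lexx orbT.
  + near=> k; have phi_gt0 : (0 < phi k)%N.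
      by near: k; exact: (cvgnyPgt phi).1 phi_oo 0%N.
    by rewrite -{1}(prednK phi_gt0) Hlam bgj prednK.
- apply: cvg_comp phi_oo _.
  exact: cvg0_le_shiftS (fun k => bnorm_ge0 _ _) (Hinex2 ^~ nu) Heps'.
Unshelve. all: by end_near. Qed.
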